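(* For every $n\ge1$, \[\widehat C_n=F(X_0,\dots,X_{n-2})+\frac{(-1)^{n-1}}{(n-1)!}X_{n-1},\] where $F$ is a polynomial with rational coefficients (depending on $n$) of total degree at most $n$.
   Context: Polynomials $S_i(n)$: let $a_0,a_1,\dots$ be indeterminates, $a(x)=\sum_{i\ge0}a_ix^i$; for a positive integer $j$ set $G(x)=\prod_{i=0}^{j-1}\frac{1+a(x)x^2}{1+ix}$, $H(x)=\prod_{i=1-j}^{-1}\frac{1+ix}{1+a(x)x^2}$, $u=2j-1$, $v=j(j-1)$. For each $n\ge1$ there are unique $S_0(n),\dots,S_n(n)\in\mathbb{Q}[a_0,\dots,a_{n-2}]$, independent of $j$, with: for every positive integer $j$ the coefficient of $x^{n-1}$ in $\frac{G(x)-H(x)}{x^2}(1+a(x)x^2)$ equals $u(a_{n-1}+S_0(n)+\sum_{i=1}^nS_i(n)v^i)$. Write $S_i(n)(c_1,\dots,c_{n-1})$ for the substitution $a_k=c_{k+1}$. Recursion: $X_0,X_1,\dots$ are indeterminates, $D$ is the $\mathbb{Q}$-linear derivation of $\mathbb{Q}[X_0,X_1,\dots]$ with $D(X_k)=X_{k+1}$, $P_1=X_0$, $P_{m+1}=D(P_m)-3X_0P_m$, and for $m\ge1$ \[\widehat C_m=-S_0(m)(\widehat C_1,\dots,\widehat C_{m-1})+\sum_{i=1}^m3\cdot2^iS_i(m)(\widehat C_1,\dots,\widehat C_{m-1})P_i.\] *)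

From HB Require Import structures.
From mathcomp Require Import all_boot all_order all_algebra.
From mathcomp Require Import finmap.
From mathcomp.multinomials Require Import monalg.

Set Implicit Arguments.
Unset Strict Implicit.
Unset Printing Implicit Defensive.

Import Order.TTheory GRing.Theory Num.Theory.
Local Open Scope ring_scope.

(* Q[Y_0, Y_1, ...] : polynomials with rational coefficients in the
   countably many indeterminates Y_k (k : nat).  Used both for
   Q[a_0, a_1, ...] (Y_k = a_k) and for Q[X_0, X_1, ...] (Y_k = X_k). *)
Definition Pinf := {malg rat[{cmonom nat}]}.

Definition mvar (k : nat) : Pinf := << (1 : rat) *g (ucm k) >>.

Definition vars_below (k : nat) (p : Pinf) : Prop :=
  forall mo, mo \in msupp p -> forall i, i \in finsupp mo -> (i < k)%N.

(* total degree: msize p = 1 + total degree (msize 0 = 0) *)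
Definition tot_deg_le (d : nat) (p : Pinf) : Prop := (msize p <= d.+1)%N.

(* a power series is represented by its truncation below x^N *)
Definition trunc (N : nat) (p : {poly Pinf}) : {poly Pinf} := \poly_(k < N) p`_k.

(* 1 / (1 + q) for q with zero constant term, truncated below x^N *)
Definition sinv (N : nat) (q : {poly Pinf}) : {poly Pinf} :=
  trunc N (\sum_(k < N) (- q) ^+ k).

Definition aser (N : nat) : {poly Pinf} := \poly_(k < N) mvar k.

Definition Gser (N j : nat) : {poly Pinf} :=
  trunc N (\prod_(i < j) ((1 + aser N * 'X^2) * sinv N ((i%:R : Pinf) *: 'X))).

(* H(x) = prod_(i=1-j)^(-1) (1 + i x) / (1 + a(x) x^2);
   the index i = -(k+1), k = 0 .. j-2 *)
Definition Hser (N j : nat) : {poly Pinf} :=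
  trunc N (\prod_(k < j.-1)
     ((1 - ((k.+1)%:R : Pinf) *: 'X) * sinv N (aser N * 'X^2))).

(* coefficient of x^(n-1) in ((G(x) - H(x)) / x^2) (1 + a(x) x^2),
   i.e. coefficient of x^(n+1) in (G(x) - H(x)) (1 + a(x) x^2);
   truncation below x^(n+2) does not affect it. *)
Definition coefGH (n j : nat) : Pinf :=
  let N := n.+2 in ((Gser N j - Hser N j) * (1 + aser N * 'X^2))`_n.+1.

(* S n i stands for S_i(n).  Defining property of S_0(n), ..., S_n(n). *)
Definition S_spec (S : nat -> nat -> Pinf) (n : nat) : Prop :=
  (forall i, (i <= n)%N -> vars_below n.-1 (S n i)) /\
  (forall j : nat, (0 < j)%N ->
     coefGH n j =
     ((2 * j - 1)%N%:R : Pinf) *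
       (mvar n.-1 + S n 0%N +
        \sum_(1 <= i < n.+1) S n i * (((j * (j - 1))%N%:R : Pinf) ^+ i))).

(* the derivation D with D(X_k) = X_(k+1), on monomials:
   D(X^mo) = sum_k mo_k X^(mo - e_k) X_(k+1) *)
Definition Dmon (mo : {cmonom nat}) : Pinf :=
  \sum_(k <- finsupp mo)
     << ((mo k)%:R : rat) *g divcm mo (ucm k) >> * mvar k.+1.

Definition D (p : Pinf) : Pinf := \sum_(mo <- msupp p) p@_mo *: Dmon mo.

(* P_1 = X_0, P_(m+1) = D(P_m) - 3 X_0 P_m *)
Definition P (m : nat) : Pinf :=
  iter m.-1 (fun p => D p - 3%:R * mvar 0 * p) (mvar 0).

(* substitution a_k := c`_k (c = [:: C_1; ...; C_(m-1)], so a_k := C_(k+1)) *)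
Definition subst (c : seq Pinf) (p : Pinf) : Pinf :=
  mmap (fun q : rat => q%:MP)
       (fun mo : {cmonom nat} => \prod_(k <- finsupp mo) (c`_k) ^+ (mo k)) p.

(* Chat_m from c = [:: Chat_1; ...; Chat_(m-1)] *)
Definition Chat_step (S : nat -> nat -> Pinf) (m : nat) (c : seq Pinf) : Pinf :=
  - subst c (S m 0%N)
  + \sum_(1 <= i < m.+1) (3 * 2 ^ i)%N%:R * subst c (S m i) * P i.

Fixpoint Chats (S : nat -> nat -> Pinf) (m : nat) : seq Pinf :=
  match m with
  | 0 => [::]
  | m'.+1 => let c := Chats S m' in rcons c (Chat_step S m'.+1 c)
  end.

Definition Chat (S : nat -> nat -> Pinf) (m : nat) : Pinf := (Chats S m)`_m.-1.

(* Give a_k the grade 2k+3 and j the grade 1.  Building G and H one factor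
   at a time, each new factor contributing a sum over j, one sees that the
   coefficient of x^r in G and in H is a polynomial in j of grade at most 2r.
   In the defining identity of the S_i(n) the factor (2j-1) v^i has degree
   2i+1 in j, so a monomial a occurs in S_i(n) only if grade(a) + 2i <= 2n+1.
   As grade(a) = 2 sdeg(a) + deg(a), where sdeg gives a_k the degree k+1 of
   the C_(k+1) substituted for it, this means sdeg(a) + i <= n for a <> 1; in
   particular S_n(n) is a constant.  Hence, by induction, C_m is a polynomial
   in X_0, ..., X_(m-1) of degree at most m, every term S_i(n)(C) P_i of C_n
   has degree at most n, and X_(n-1) only enters through
   P_n = X_(n-1) + (polynomial in X_0, ..., X_(n-2)).  Finally S_n(n) is half
   the coefficient of j^(2n+1) in the a-free part of the coefficient of x^(n+1)
   in G - H, i.e. of prod (1 + i x)^-1 - prod (1 - k x); the recurrences in j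
   of these coefficients give (-1)^(n-1) / (3 2^(n-1) (n-1)!), so that
   3 2^n S_n(n) = (-1)^(n-1) / (n-1)!. *)

From HB Require Import structures.
From mathcomp Require Import all_boot all_order all_algebra.
From mathcomp Require Import finmap.
From mathcomp.multinomials Require Import monalg.
From mathcomp Require Import ring zify.

Set Implicit Arguments.
Unset Strict Implicit.
Unset Printing Implicit Defensive.

Import Order.TTheory GRing.Theory Num.Theory.
Local Open Scope fset_scope.
Local Open Scope ring_scope.

Local Notation "1" := (@mone _) : monom_scope.
Local Notation "x * y" := (mmul x y) : monom_scope.
Local Notation cm := {cmonom nat}.
Local Notation const_coef := (@mcoeff _ rat (1%M : cm)).

Definition all_msupp (Q : cm -> Prop) (p : Pinf) := forall m, m \in msupp p -> Q m.

Section AllMsupp.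

Implicit Types (Q : cm -> Prop) (p q : Pinf).

Lemma sub_all_msupp Q Q' p : (forall m, Q m -> Q' m) -> all_msupp Q p -> all_msupp Q' p.
Proof. by move=> h hp m /hp /h. Qed.

Lemma all_msupp0 Q : all_msupp Q 0.
Proof. by move=> m; rewrite msupp0. Qed.

Lemma all_msuppD Q p q : all_msupp Q p -> all_msupp Q q -> all_msupp Q (p + q).
Proof.
move=> hp hq m /(fsubsetP (msuppD_le p q)); rewrite in_fsetU.
by case/orP=> [/hp|/hq].
Qed.

Lemma all_msuppN Q p : all_msupp Q p -> all_msupp Q (- p).
Proof. by rewrite /all_msupp msuppN. Qed.

Lemma all_msuppB Q p q : all_msupp Q p -> all_msupp Q q -> all_msupp Q (p - q).
Proof. by move=> hp hq; apply: all_msuppD hp (all_msuppN hq). Qed.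

Lemma all_msupp_sum Q (I : Type) (r : seq I) (P : pred I) (F : I -> Pinf) :
  (forall i, P i -> all_msupp Q (F i)) -> all_msupp Q (\sum_(i <- r | P i) F i).
Proof.
move=> h; elim/big_rec: _ => [|i x Pi hx]; first exact: all_msupp0.
exact: all_msuppD (h _ Pi) hx.
Qed.

Lemma all_msuppZ Q (c : rat) p : all_msupp Q p -> all_msupp Q (c *: p).
Proof. by move=> hp m /(fsubsetP (msuppZ_le c p)) /hp. Qed.

Lemma all_msuppM (Q1 Q2 Q3 : cm -> Prop) p q :
  (forall m1 m2, Q1 m1 -> Q2 m2 -> Q3 (m1 * m2)%M) ->
  all_msupp Q1 p -> all_msupp Q2 q -> all_msupp Q3 (p * q).
Proof.
move=> h hp hq m /msuppM_le [m1 [m2 [h1 h2 ->]]].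
exact: h (hp _ h1) (hq _ h2).
Qed.

Lemma all_msuppU Q (c : rat) (k : cm) : Q k -> all_msupp Q << c *g k >>.
Proof. by move=> h m /(fsubsetP msuppU_le); rewrite in_fset1 => /eqP->. Qed.

Lemma all_msuppC Q (c : rat) : Q 1%M -> all_msupp Q c%:MP.
Proof. by move=> h m /(fsubsetP (msuppC_le c)); rewrite in_fset1 => /eqP->. Qed.

Lemma all_msupp_nat Q k : Q 1%M -> all_msupp Q (k%:R : Pinf).
Proof. by move=> h; rewrite -mpolyC_nat; apply: all_msuppC. Qed.

Lemma all_msupp1 Q : Q 1%M -> all_msupp Q (1 : Pinf).
Proof. by move=> h; rewrite -mpolyC1E; apply: all_msuppC. Qed.

Lemma all_msupp_mvar Q k : Q (ucm k) -> all_msupp Q (mvar k).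
Proof. exact: all_msuppU. Qed.

End AllMsupp.

Definition mweight (w : nat -> nat) (m : cm) : nat :=
  (\sum_(i <- finsupp m) m i * w i)%N.

Section Weights.

Variable w : nat -> nat.

Lemma mweightEw (m : cm) (d : {fset nat}) : finsupp m `<=` d ->
  mweight w m = (\sum_(i <- d) m i * w i)%N.
Proof.
move=> le; rewrite /mweight (big_fset_incl _ le) //.
by move=> i _; rewrite -cmE_neq0 negbK => /eqP->.
Qed.

Lemma mweightM (m1 m2 : cm) : mweight w (m1 * m2)%M = (mweight w m1 + mweight w m2)%N.
Proof.
rewrite (mweightEw (fsubsetUl (finsupp m1) (finsupp m2))).
rewrite (mweightEw (fsubsetUr (finsupp m1) (finsupp m2))).
by rewrite /mweight mdomD -big_split /=; apply/eq_bigr=> /= i _; rewrite cmM mulnDl.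
Qed.

Lemma mweight1 : mweight w 1%M = 0%N.
Proof. by rewrite /mweight mdom1 big_seq_fset0. Qed.

Lemma mweightU k : mweight w (ucm k) = w k.
Proof. by rewrite /mweight mdomU big_seq_fset1 cmUU mul1n. Qed.

Lemma leq_mweight w' (m : cm) : (forall i, w i <= w' i)%N -> (mweight w m <= mweight w' m)%N.
Proof. by move=> h; apply: leq_sum => i _; rewrite leq_mul2l h orbT. Qed.

End Weights.

Lemma mdeg_mweight (m : cm) : mdeg m = mweight (fun _ => 1%N) m.
Proof. by rewrite mdegE /mweight; apply: eq_bigr => i _; rewrite muln1. Qed.

Definition grade := mweight (fun i => i.*2.+3).
Definition sdeg := mweight succn.

Lemma grade1 : grade 1%M = 0%N.
Proof. exact: mweight1. Qed.

Lemma gradeU k : grade (ucm k) = k.*2.+3.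
Proof. exact: mweightU. Qed.

Lemma grade_sdeg (m : cm) : grade m = ((sdeg m).*2 + mdeg m)%N.
Proof.
rewrite mdeg_mweight /grade /sdeg /mweight -mul2n big_distrr -big_split /=.
apply: eq_bigr => i _; rewrite mulnCA -mulnDr; congr (_ * _)%N.
by rewrite -!mul2n; lia.
Qed.

Lemma mdeg_gt0 (m : cm) : m != 1%M -> (0 < mdeg m)%N.
Proof. by rewrite lt0n mdeg_eq0. Qed.

Lemma sdeg_ge_mdeg (m : cm) : (mdeg m <= sdeg m)%N.
Proof. by rewrite mdeg_mweight; apply: leq_mweight. Qed.

Lemma grade_ge3 (m : cm) : m != 1%M -> (3 <= grade m)%N.
Proof. by move/mdeg_gt0; rewrite grade_sdeg; have := sdeg_ge_mdeg m; lia. Qed.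

Lemma eq_poly_nat (p q : {poly rat}) : (forall t : nat, p.[t%:R] = q.[t%:R]) -> p = q.
Proof.
move=> h; apply/eqP; rewrite -subr_eq0; apply/negPn/negP => nz.
pose rs := [seq (i%:R : rat) | i <- iota 0 (size (p - q))].
have rs_roots : all (root (p - q)) rs.
  by apply/allP => x /mapP [i _ ->]; rewrite /root hornerD hornerN h subrr.
have rs_uniq : uniq rs.
  by rewrite map_inj_uniq ?iota_uniq // => i j; exact: (mulrIn (oner_neq0 _)).
by have := max_poly_roots nz rs_roots rs_uniq; rewrite size_map size_iota ltnn.
Qed.

Definition faulhaber (s : nat) (F : {poly rat}) :=
  [/\ (size F <= s.+2)%N, F`_s.+1 = (s.+1%:R)^-1, F.[0] = 0 &
      forall x, F.[x + 1] = F.[x] + x ^+ s].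

Lemma faulhaberE s F : faulhaber s F -> forall t : nat, F.[t%:R] = \sum_(u < t) u%:R ^+ s.
Proof.
case=> _ _ F0 FS; elim=> [|t ih]; first by rewrite big_ord0 F0.
by rewrite big_ord_recr /= -natr1 FS ih.
Qed.

(* The polynomial for s = e is obtained from those for s < e through
   (x+1)^(e+1) - x^(e+1) = \sum_(s <= e) 'C(e+1, s) x^s. *)
Lemma faulhaber_exists e : exists F : nat -> {poly rat}, forall s, (s < e)%N -> faulhaber s (F s).
Proof.
elim: e => [|e [Fs hFs]]; first by exists (fun _ => 0).
pose F := (e.+1%:R)^-1 *: ('X^(e.+1) - \sum_(s < e) ('C(e.+1, s)%:R *: Fs s)).
have Fs_high (s : 'I_e) j : (e < j)%N -> (Fs s)`_j = 0.
  move=> hj; have [+ _ _ _] := hFs s (ltn_ord s) => /leq_sizeP; apply.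
  by apply: leq_trans hj; rewrite ltnS ltn_ord.
have F_high j : (e < j)%N -> F`_j = (e.+1%:R)^-1 * (j == e.+1)%:R.
  move=> hj; rewrite coefZ coefB coefXn coef_sum big1 ?subr0 //.
  by move=> s _; rewrite coefZ Fs_high // mulr0.
exists (fun s => if s == e then F else Fs s) => k; rewrite ltnS leq_eqVlt.
case: eqP => [-> _|_ /= hk]; last exact: hFs.
split.
- apply/leq_sizeP => j hj; rewrite F_high; last exact: leq_trans hj.
  by rewrite (_ : (j == e.+1) = false) ?mulr0 //; apply/negbTE; rewrite neq_ltn hj orbT.
- by rewrite F_high // eqxx mulr1.
- rewrite hornerZ hornerD hornerN hornerXn expr0n /= sub0r horner_sum big1 ?oppr0 ?mulr0 //.
  by move=> s _; rewrite hornerZ; have [_ _ -> _] := hFs s (ltn_ord s); rewrite mulr0.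
- move=> x; rewrite !hornerZ !hornerD !hornerN !hornerXn !horner_sum.
  have -> : \sum_(i < e) ('C(e.+1, i)%:R *: Fs i).[x + 1] =
            \sum_(i < e) ('C(e.+1, i)%:R *: Fs i).[x] + \sum_(i < e) 'C(e.+1, i)%:R * x ^+ i.
    rewrite -big_split /=; apply: eq_bigr => i _.
    by rewrite !hornerZ; have [_ _ _ ->] := hFs i (ltn_ord i); rewrite mulrDr.
  rewrite exprD1n !big_ord_recr /= binn binSn mulr1n.
  have -> : \sum_(i < e) x ^+ i *+ 'C(e.+1, i) = \sum_(i < e) 'C(e.+1, i)%:R * x ^+ i.
    by apply: eq_bigr => i _; rewrite mulr_natl.
  have he : (e.+1%:R : rat) != 0 by rewrite pnatr_eq0.
  by rewrite -mulr_natl; field; rewrite addrC natr1.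
Qed.

Definition natpoly (d : nat) (c : rat) (f : nat -> rat) :=
  exists p : {poly rat}, [/\ (size p <= d.+1)%N, p`_d = c & forall t, f t = p.[t%:R]].

Section NatPoly.

Implicit Types (d : nat) (c : rat) (f g : nat -> rat).

Lemma eq_natpoly d c f g : (forall t, f t = g t) -> natpoly d c f -> natpoly d c g.
Proof. by move=> e [p [h1 h2 h3]]; exists p; split=> // t; rewrite -e. Qed.

Lemma natpoly0 d : natpoly d 0 (fun _ => 0).
Proof. by exists 0; split; rewrite ?size_poly0 ?coef0 // => t; rewrite horner0. Qed.

Lemma natpolyD d c c' f g : natpoly d c f -> natpoly d c' g ->
  natpoly d (c + c') (fun t => f t + g t).
Proof.
move=> [p [h1 h2 h3]] [q [k1 k2 k3]]; exists (p + q); split.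
- by apply: leq_trans (size_polyD _ _) _; rewrite geq_max h1 k1.
- by rewrite coefD h2 k2.
- by move=> t; rewrite hornerD h3 k3.
Qed.

Lemma natpolyN d c f : natpoly d c f -> natpoly d (- c) (fun t => - f t).
Proof.
move=> [p [h1 h2 h3]]; exists (- p); split.
- by rewrite size_polyN.
- by rewrite coefN h2.
- by move=> t; rewrite hornerN h3.
Qed.

Lemma natpolyS d c f : natpoly d c f -> natpoly d.+1 0 f.
Proof.
move=> [p [h1 h2 h3]]; exists p; split=> //; first exact: leq_trans h1 _.
by move/leq_sizeP: h1; apply.
Qed.

Lemma natpoly_mulS d c f : natpoly d c f -> natpoly d.+1 c (fun t => t.+1%:R * f t).
Proof.
move=> [p [h1 h2 h3]]; move/leq_sizeP: (h1) => p_high.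
exists (p * ('X + 1)); split.
- apply/leq_sizeP => j hj; rewrite mulrDr mulr1 coefD coefMX.
  by case: j hj => // j hj; rewrite !p_high ?addr0 // ltnW.
- by rewrite mulrDr mulr1 coefD coefMX /= h2 p_high ?addr0.
- by move=> t; rewrite hornerM hornerD hornerX hornerC natr1 h3 mulrC.
Qed.

Lemma natpoly_antidiff d c f g : natpoly d c g -> (forall t, f t.+1 = f t + g t) ->
  natpoly d.+1 (c / d.+1%:R) f.
Proof.
move=> [p [h1 h2 h3]] fS.
have [Fs hFs] := faulhaber_exists d.+1.
have Fs_high i j : (i < d.+1)%N -> (i.+1 < j)%N -> (Fs i)`_j = 0.
  by move=> hi; have [/leq_sizeP hsz _ _ _] := hFs i hi; apply: hsz.
exists ((f 0)%:P + \sum_(i < d.+1) p`_i *: Fs i); split.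
- apply/leq_sizeP => j hj; rewrite coefD coefC.
  rewrite (_ : (j == 0) = false) ?add0r; last by case: j hj.
  rewrite coef_sum big1 // => i _; rewrite coefZ (Fs_high _ _ (ltn_ord i)) ?mulr0 //.
  by apply: leq_trans hj; rewrite !ltnS -ltnS.
- rewrite coefD coefC /= add0r coef_sum big_ord_recr /= big1.
    by rewrite add0r coefZ h2; have [_ -> _ _] := hFs d (ltnSn d).
  move=> i _; rewrite coefZ (Fs_high _ _ (ltnW (ltn_ord i))) ?mulr0 // ltnS.
  exact: ltn_ord.
- elim=> [|t ih].
    rewrite hornerD hornerC horner_sum big1 ?addr0 // => i _.
    by rewrite hornerZ; have [_ _ -> _] := hFs i (ltn_ord i); rewrite mulr0.
  rewrite fS ih -natr1 !hornerD !hornerC !horner_sum -addrA; congr (_ + _).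
  rewrite h3 (horner_coef_wide _ h1) -big_split /=; apply: eq_bigr => i _.
  by rewrite !hornerZ; have [_ _ _ ->] := hFs i (ltn_ord i); rewrite mulrDr.
Qed.

End NatPoly.

(* [esym_lead r] is the leading coefficient of the polynomial t |-> (-1)^r
   e_r(1, ..., t) of degree 2r, the coefficient of x^r in prod_(k <= t) (1 - k x);
   [diff_lead r] is the coefficient of t^(2r-1) in the coefficient of x^r in
   prod_(k <= t) (1 + k x)^-1 - prod_(k <= t) (1 - k x). *)
Definition esym_lead (r : nat) : rat := (-1) ^+ r / (2 ^+ r * r`!%:R).

Definition diff_lead (r : nat) : rat :=
  if r is r'.+2 then (-1) ^+ r' / (3 * 2 ^+ r' * r'`!%:R) else 0.

Lemma natr_fact_neq0 r : (r`!%:R : rat) != 0.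
Proof. by rewrite pnatr_eq0 -lt0n fact_gt0. Qed.

Lemma esym_leadS r : esym_lead r.+1 = - esym_lead r / (r.*2.+2)%:R.
Proof.
rewrite /esym_lead factS exprS natrM exprS.
have -> : ((r.*2.+2)%:R : rat) = 2 * r.+1%:R by rewrite -natrM; congr _%:R; lia.
by field; rewrite nat1r pnatr_eq0 natr_fact_neq0 expf_neq0.
Qed.

Lemma diff_leadS r : diff_lead r.+2 = (esym_lead r - diff_lead r.+1) / (r.*2.+3)%:R.
Proof.
case: r => [|r]; first by rewrite /diff_lead /esym_lead /= !expr0 fact0 subr0 !mulr1.
rewrite /diff_lead /esym_lead factS natrM !exprS.
have -> : (((r.+1).*2.+3)%:R : rat) = 2 * r.+1%:R + 3.
  by rewrite -natrM -natrD; congr _%:R; lia.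
by field; rewrite natr_fact_neq0 nat1r -natrM -natrD !pnatr_eq0 expf_neq0.
Qed.

(* [G r t] and [H r t] stand for the coefficients of x^r in
   prod_(k <= t) (1 + k x)^-1 and prod_(1 <= k <= t) (1 - k x). *)
Section ProductCoefficients.

Variables (N : nat) (G H : nat -> nat -> rat).
Hypotheses (G0t : forall t, G 0%N t = 1) (H0t : forall t, H 0%N t = 1).
Hypothesis GS : forall r t, (0 < r < N)%N -> G r t = G r t.+1 + t.+1%:R * G r.-1 t.+1.
Hypothesis HS : forall r t, (0 < r < N)%N -> H r t.+1 = H r t - t.+1%:R * H r.-1 t.

Lemma natpoly_esym r : (r < N)%N -> natpoly r.*2 (esym_lead r) (H r).
Proof.
elim: r => [_|r ih hr].
  exists 1; split; first by rewrite size_poly1.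
    by rewrite coef1 /esym_lead /= !expr0 fact0 mul1r invr1.
  by move=> t; rewrite H0t hornerC.
rewrite doubleS esym_leadS.
apply: natpoly_antidiff (natpoly_mulS (natpolyN (ih (ltnW hr)))) _ => t.
by rewrite HS ?hr // mulrN.
Qed.

Lemma natpoly_diff r : (r.+1 < N)%N ->
  natpoly r.*2.+1 (diff_lead r.+1) (fun t => G r.+1 t - H r.+1 t) /\
  exists c, natpoly r.*2 c (fun t => (G r.+1 t.+1 - H r.+1 t.+1) - (G r.+1 t - H r.+1 t)).
Proof.
elim: r => [hN|r ih hr].
  have step t : G 1%N t.+1 - H 1%N t.+1 = (G 1%N t - H 1%N t) + 0.
    by rewrite (@GS 1%N t) ?hN // (@HS 1%N t) ?hN //= G0t H0t; ring.
  split; first by have := natpoly_antidiff (natpoly0 0) step; rewrite mul0r.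
  by exists 0; apply: eq_natpoly (natpoly0 0) => t; rewrite step addr0 subrr.
have [diff_r [c diff_step]] := ih (ltnW hr).
(* the forward difference of G r.+2 - H r.+2, by the two recurrences *)
pose g t := - (t.+1%:R * ((G r.+1 t - H r.+1 t) +
                          ((G r.+1 t.+1 - H r.+1 t.+1) - (G r.+1 t - H r.+1 t))))
            + t.+1%:R * (t.+1%:R * H r t).
have natpoly_g : natpoly r.*2.+2 (- diff_lead r.+1 + esym_lead r) g.
  apply: natpolyD; last by apply/natpoly_mulS/natpoly_mulS/natpoly_esym/ltnW/ltnW.
  apply/natpolyN/natpoly_mulS.
  by rewrite -[diff_lead r.+1]addr0; apply: natpolyD diff_r (natpolyS diff_step).
have gE t : G r.+2 t.+1 - H r.+2 t.+1 = (G r.+2 t - H r.+2 t) + g t.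
  by rewrite /g (@GS r.+2 t) ?hr // (@HS r.+2 t) ?hr //= (@HS r.+1 t) ?(ltnW hr) //=; ring.
split.
  by rewrite doubleS diff_leadS addrC; apply: natpoly_antidiff natpoly_g gE.
by exists (- diff_lead r.+1 + esym_lead r); apply: eq_natpoly natpoly_g => t; rewrite gE; ring.
Qed.

End ProductCoefficients.

Definition weighted (D : nat) (Phi : {poly Pinf}) :=
  forall e, all_msupp (fun m => grade m + e <= D)%N Phi`_e.

Definition wpoly (D : nat) (f : nat -> Pinf) :=
  exists Phi, weighted D Phi /\ forall t, f t = Phi.[t%:R].

Section Weighted.

Implicit Types (D : nat) (Phi Psi : {poly Pinf}) (f g : nat -> Pinf).

Lemma weighted_widen D D' Phi : (D <= D')%N -> weighted D Phi -> weighted D' Phi.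
Proof. by move=> le h e; apply: sub_all_msupp (h e) => m /leq_trans; apply. Qed.

Lemma weighted0 D : weighted D 0.
Proof. by move=> e; rewrite coef0; apply: all_msupp0. Qed.

Lemma weightedD D Phi Psi : weighted D Phi -> weighted D Psi -> weighted D (Phi + Psi).
Proof. by move=> hp hq e; rewrite coefD; apply: all_msuppD. Qed.

Lemma weightedN D Phi : weighted D Phi -> weighted D (- Phi).
Proof. by move=> hp e; rewrite coefN; apply: all_msuppN. Qed.

Lemma weighted_sum D (I : Type) (r : seq I) (P : pred I) (F : I -> {poly Pinf}) :
  (forall i, P i -> weighted D (F i)) -> weighted D (\sum_(i <- r | P i) F i).
Proof.
move=> h; elim/big_rec: _ => [|i x Pi hx]; first exact: weighted0.
exact: weightedD (h _ Pi) hx.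
Qed.

Lemma weightedM D1 D2 Phi Psi : weighted D1 Phi -> weighted D2 Psi ->
  weighted (D1 + D2) (Phi * Psi).
Proof.
move=> hp hq e; rewrite coefM; apply: all_msupp_sum => j _.
apply: all_msuppM (hp j) (hq (e - j)%N) => m1 m2 h1 h2.
by rewrite /grade mweightM -/grade; have := ltn_ord j; lia.
Qed.

Lemma weightedC D (c : Pinf) : all_msupp (fun m => grade m <= D)%N c -> weighted D c%:P.
Proof.
move=> h e; rewrite coefC; case: eqP => [->|_]; last exact: all_msupp0.
by apply: sub_all_msupp h => m; rewrite addn0.
Qed.

Lemma weightedX : weighted 1 'X.
Proof.
move=> e; rewrite coefX; case: eqP => [->|_]; last exact: all_msupp0.
by apply: all_msupp1; rewrite grade1.
Qed.

Lemma weighted_coef_eq0 D Phi e : weighted D Phi -> (D < e)%N -> Phi`_e = 0.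
Proof.
move=> h he; apply/eqP; rewrite -msupp_eq0; apply/eqP/fsetP => m.
by rewrite inE; apply/negP => /h; lia.
Qed.

Lemma size_weighted D Phi : weighted D Phi -> (size Phi <= D.+1)%N.
Proof. by move=> h; apply/leq_sizeP => j; apply: weighted_coef_eq0. Qed.

Lemma eq_wpoly D f g : (forall t, f t = g t) -> wpoly D f -> wpoly D g.
Proof. by move=> e [p [h1 h2]]; exists p; split=> // t; rewrite -e. Qed.

Lemma wpoly_widen D D' f : (D <= D')%N -> wpoly D f -> wpoly D' f.
Proof. by move=> le [p [h1 h2]]; exists p; split=> //; apply: weighted_widen h1. Qed.

Lemma wpolyD D f g : wpoly D f -> wpoly D g -> wpoly D (fun t => f t + g t).
Proof.
move=> [p [h1 h2]] [q [k1 k2]]; exists (p + q); split; first exact: weightedD.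
by move=> t; rewrite hornerD h2 k2.
Qed.

Lemma wpolyN D f : wpoly D f -> wpoly D (fun t => - f t).
Proof.
move=> [p [h1 h2]]; exists (- p); split; first exact: weightedN.
by move=> t; rewrite hornerN h2.
Qed.

Lemma wpolyB D f g : wpoly D f -> wpoly D g -> wpoly D (fun t => f t - g t).
Proof. by move=> hf hg; apply: wpolyD hf (wpolyN hg). Qed.

Lemma wpolyM D1 D2 f g : wpoly D1 f -> wpoly D2 g -> wpoly (D1 + D2) (fun t => f t * g t).
Proof.
move=> [p [h1 h2]] [q [k1 k2]]; exists (p * q); split; first exact: weightedM.
by move=> t; rewrite hornerM h2 k2.
Qed.

Lemma wpolyC D (c : Pinf) : all_msupp (fun m => grade m <= D)%N c -> wpoly D (fun _ => c).
Proof. by move=> h; exists c%:P; split; [apply: weightedC | move=> t; rewrite hornerC]. Qed.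

Lemma wpoly_rat D (c : rat) : wpoly D (fun _ => c%:MP).
Proof. by apply: wpolyC; apply: all_msuppC; rewrite grade1. Qed.

Lemma wpoly_natD o : wpoly 1 (fun t => (t + o)%:R).
Proof.
exists ('X + (o%:R : Pinf)%:P); split.
  by apply: weightedD weightedX _; apply: weightedC; apply: all_msupp_nat; rewrite grade1.
by move=> t; rewrite hornerD hornerX hornerC natrD.
Qed.

Lemma wpoly_sum D (I : Type) (r : seq I) (P : pred I) (F : I -> nat -> Pinf) :
  (forall i, P i -> wpoly D (F i)) -> wpoly D (fun t => \sum_(i <- r | P i) F i t).
Proof.
move=> h; elim: r => [|i r ih].
  by apply: eq_wpoly (wpoly_rat D 0) => t; rewrite big_nil malgC0E.
case Pi: (P i).
  by apply: eq_wpoly (wpolyD (h _ Pi) ih) => t; rewrite big_cons Pi.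
by apply: eq_wpoly ih => t; rewrite big_cons Pi.
Qed.

Lemma wpoly_at0 D f : wpoly D f -> all_msupp (fun m => grade m <= D)%N (f 0%N).
Proof.
move=> [p [h1 h2]]; rewrite h2 horner_coef0.
by apply: sub_all_msupp (h1 0%N) => m; rewrite addn0.
Qed.

Lemma wpoly_partial_sum D f : wpoly D f -> wpoly D.+1 (fun t => \sum_(u < t) f u).
Proof.
move=> [p [h1 h2]].
have [Fs hFs] := faulhaber_exists D.+1.
exists (\sum_(i < D.+1) (p`_i)%:P * map_poly (@malgC _ rat) (Fs i)); split.
  apply: weighted_sum => i _.
  have hi : (i <= D)%N by rewrite -ltnS ltn_ord.
  apply: (@weighted_widen ((D - i) + i.+1)%N); first by lia.
  apply: weightedM.
    by apply: weightedC; apply: sub_all_msupp (h1 i) => m; lia.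
  move=> e; rewrite coef_map /=.
  have [/leq_sizeP hsz _ _ _] := hFs i (ltn_ord i).
  case: (leqP e i.+1) => he; first by apply: all_msuppC; rewrite grade1.
  by rewrite hsz // malgC0E; apply: all_msupp0.
move=> t; rewrite horner_sum.
have -> : \sum_(u < t) f u = \sum_(u < t) \sum_(i < D.+1) p`_i * u%:R ^+ i.
  by apply: eq_bigr => u _; rewrite h2 (horner_coef_wide _ (size_weighted h1)).
rewrite exchange_big /=; apply: eq_bigr => i _.
rewrite hornerM hornerC -mulr_sumr; congr (_ * _).
rewrite -(rmorph_nat (@malgC _ rat) t) horner_map /= (faulhaberE (hFs i (ltn_ord i))).
by rewrite rmorph_sum; apply: eq_bigr => u _; rewrite rmorphXn rmorph_nat.
Qed.

End Weighted.

Lemma sum_expr0 {R : nzRingType} N : (0 < N)%N -> \sum_(k < N) (0 : R) ^+ k = 1.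
Proof. by case: N => // N _; rewrite big_ord_recl expr0 big1 ?addr0 // => i _; rewrite expr0n. Qed.

Definition eq_below {R : nzRingType} (N : nat) (A B : {poly R}) :=
  forall k, (k < N)%N -> A`_k = B`_k.

Lemma eq_below_trunc N p : eq_below N (trunc N p) p.
Proof. by move=> k hk; rewrite /trunc coef_poly hk. Qed.

Lemma eq_below_map N (A B : {poly Pinf}) :
  eq_below N A B -> eq_below N (map_poly const_coef A) (map_poly const_coef B).
Proof. by move=> h k hk; rewrite !coef_map /= h. Qed.

Lemma coefM_eq_belowl {R : nzRingType} N (A A' B : {poly R}) k :
  eq_below N A A' -> (k < N)%N -> (A * B)`_k = (A' * B)`_k.
Proof.
move=> h hk; rewrite !coefM; apply: eq_bigr => j _; rewrite h //.
by apply: leq_ltn_trans hk; rewrite -ltnS.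
Qed.

Lemma coefM_eq_belowr {R : nzRingType} N (A B B' : {poly R}) k :
  eq_below N B B' -> (k < N)%N -> (A * B)`_k = (A * B')`_k.
Proof.
move=> h hk; rewrite !coefM; apply: eq_bigr => j _; rewrite h //.
by apply: leq_ltn_trans hk; apply: leq_subr.
Qed.

(* In a
   [graded_unit] family the coefficient of x^s has weighted degree 2s-1 only;
   a product of t such factors gains one degree in every coefficient, which
   gives a [graded] family. *)
Definition graded (N : nat) (A : nat -> {poly Pinf}) :=
  forall r, (r < N)%N -> wpoly r.*2 (fun t => (A t)`_r).

Definition graded_unit (N : nat) (c : rat) (A : nat -> {poly Pinf}) :=
  (forall t, (A t)`_0 = c%:MP) /\
  (forall s, (0 < s < N)%N -> wpoly s.*2.-1 (fun t => (A t)`_s)).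

Section GradedFamilies.

Variable N : nat.
Implicit Types (c d : rat) (A B : nat -> {poly Pinf}).

Lemma graded_unit_coef c A j : graded_unit N c A -> (j < N)%N ->
  wpoly j.*2.-1 (fun t => (A t)`_j).
Proof.
case=> A0 As hj; case: j hj => [|j] hj; last by apply: As; rewrite hj.
by apply: eq_wpoly (wpoly_rat _ c) => t; rewrite A0.
Qed.

Lemma eq_graded_unit c A B : (forall t, A t = B t) -> graded_unit N c A -> graded_unit N c B.
Proof.
move=> e [A0 As]; split=> [t|s hs]; first by rewrite -e.
by apply: eq_wpoly (As s hs) => t; rewrite e.
Qed.

Lemma graded_unit_cst c (P : {poly Pinf}) : P`_0 = c%:MP ->
  (forall s, (0 < s < N)%N -> all_msupp (fun m => grade m <= s.*2.-1)%N P`_s) ->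
  graded_unit N c (fun _ => P).
Proof. by move=> P0 Ps; split=> // s hs; apply/wpolyC/Ps. Qed.

Lemma graded_unit1 : graded_unit N 1 (fun _ => 1).
Proof.
apply: graded_unit_cst; first by rewrite coef1 mpolyC1E.
by move=> [|s] // _; rewrite coef1; apply: all_msupp0.
Qed.

Lemma graded_unit0 : graded_unit N 0 (fun _ => 0).
Proof.
apply: graded_unit_cst; first by rewrite coef0 malgC0E.
by move=> s _; rewrite coef0; apply: all_msupp0.
Qed.

Lemma graded_unitD c d A B : graded_unit N c A -> graded_unit N d B ->
  graded_unit N (c + d) (fun t => A t + B t).
Proof.
move=> [A0 As] [B0 Bs]; split=> [t|s hs]; first by rewrite coefD A0 B0 rmorphD.
by apply: eq_wpoly (wpolyD (As s hs) (Bs s hs)) => t; rewrite coefD.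
Qed.

Lemma graded_unitN c A : graded_unit N c A -> graded_unit N (- c) (fun t => - A t).
Proof.
move=> [A0 As]; split=> [t|s hs]; first by rewrite coefN A0 rmorphN.
by apply: eq_wpoly (wpolyN (As s hs)) => t; rewrite coefN.
Qed.

Lemma graded_unitM c d A B : graded_unit N c A -> graded_unit N d B ->
  graded_unit N (c * d) (fun t => A t * B t).
Proof.
move=> hA hB; split=> [t|s /andP [s0 sN]].
  by rewrite coefM big_ord1 subnn hA.1 hB.1 rmorphM.
apply: eq_wpoly (fun t => esym (coefM _ _ _)) _; apply: wpoly_sum => j _.
have hj : (j < N)%N by apply: leq_ltn_trans sN; rewrite -ltnS.
have hsj : (s - j < N)%N by apply: leq_ltn_trans sN; apply: leq_subr.
apply: wpoly_widen (wpolyM (graded_unit_coef hA hj) (graded_unit_coef hB hsj)).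
by have := ltn_ord j; lia.
Qed.

Lemma graded_unit_sum (I : Type) (r : seq I) (c : I -> rat) (F : I -> nat -> {poly Pinf}) :
  (forall i, graded_unit N (c i) (F i)) ->
  graded_unit N (\sum_(i <- r) c i) (fun t => \sum_(i <- r) F i t).
Proof.
move=> h; elim: r => [|i r ih].
  by rewrite big_nil; apply: eq_graded_unit graded_unit0 => t; rewrite big_nil.
by rewrite big_cons; apply: eq_graded_unit (graded_unitD (h i) ih) => t; rewrite big_cons.
Qed.

Lemma graded_unitX c A k : graded_unit N c A -> graded_unit N (c ^+ k) (fun t => A t ^+ k).
Proof.
move=> hA; elim: k => [|k ih].
  by rewrite expr0; apply: eq_graded_unit graded_unit1 => t; rewrite expr0.
by rewrite exprS; apply: eq_graded_unit (graded_unitM hA ih) => t; rewrite exprS.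
Qed.

Lemma graded_unit_trunc c A : (0 < N)%N -> graded_unit N c A ->
  graded_unit N c (fun t => trunc N (A t)).
Proof.
move=> N0 [A0 As]; split=> [t|s hs]; first by rewrite (eq_below_trunc _ N0).
have /andP [_ sN] := hs.
by apply: eq_wpoly (As s hs) => t; rewrite (eq_below_trunc _ sN).
Qed.

Lemma graded_unit_sinv q : (0 < N)%N -> graded_unit N 0 (fun t => - q t) ->
  graded_unit N 1 (fun t => sinv N (q t)).
Proof.
move=> N0 hq; apply: graded_unit_trunc => //.
have := graded_unit_sum (index_enum 'I_N) (fun k => graded_unitX (val k) hq).
by rewrite sum_expr0.
Qed.

Lemma gradedB A B : graded N A -> graded N B -> graded N (fun t => A t - B t).
Proof.
move=> hA hB r hr; apply: eq_wpoly (wpolyB (hA r hr) (hB r hr)) => t.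
by rewrite coefB.
Qed.

Lemma graded_mul_unit c A B : graded N A -> graded_unit N c B -> graded N (fun t => A t * B t).
Proof.
move=> hA hB r hr; apply: eq_wpoly (fun t => esym (coefM _ _ _)) _.
apply: wpoly_sum => j _.
have hj : (j < N)%N by apply: leq_ltn_trans hr; rewrite -ltnS.
have hrj : (r - j < N)%N by apply: leq_ltn_trans hr; apply: leq_subr.
apply: wpoly_widen (wpolyM (hA _ hj) (graded_unit_coef hB hrj)).
by have := ltn_ord j; lia.
Qed.

Lemma graded_prod A B : graded_unit N 1 B -> (forall t, eq_below N (A t.+1) (A t * B t)) ->
  (forall r, (r < N)%N -> all_msupp (fun m => grade m <= r.*2)%N (A 0%N)`_r) -> graded N A.
Proof.
move=> hB AS A0; elim/ltn_ind => r ih hr.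
pose D t := \sum_(j < r) (A t)`_j * (B t)`_(r - j).
have AS_r t : (A t.+1)`_r = (A t)`_r + D t.
  by rewrite AS // coefM big_ord_recr /= subnn hB.1 mpolyC1E mulr1 addrC.
have A_r t : (A t)`_r = (A 0%N)`_r + \sum_(u < t) D u.
  elim: t => [|t iht]; first by rewrite big_ord0 addr0.
  by rewrite AS_r iht big_ord_recr /= addrA.
have [r0|r_gt0] := posnP r.
  apply: eq_wpoly (wpolyC (A0 r hr)) => t.
  by rewrite (A_r t) big1 ?addr0 // => u _; rewrite /D r0 big_ord0.
have wpoly_D : wpoly r.*2.-1 D.
  apply: wpoly_sum => j _.
  have hj : (j < N)%N by apply: ltn_trans hr.
  have hrj : (r - j < N)%N by apply: leq_ltn_trans hr; apply: leq_subr.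
  apply: wpoly_widen (wpolyM (ih j (ltn_ord j) hj) (graded_unit_coef hB hrj)).
  by have := ltn_ord j; lia.
have wpoly_sumD := wpoly_partial_sum wpoly_D.
rewrite prednK ?double_gt0 // in wpoly_sumD.
by apply: eq_wpoly (wpolyD (wpolyC (A0 _ hr)) wpoly_sumD) => t; rewrite (A_r t).
Qed.

End GradedFamilies.

Definition Gfactor N (i : nat) : {poly Pinf} :=
  (1 + aser N * 'X^2) * sinv N ((i%:R : Pinf) *: 'X).

Definition Hfactor N (k : nat) : {poly Pinf} :=
  (1 - ((k.+1)%:R : Pinf) *: 'X) * sinv N (aser N * 'X^2).

Lemma trunc_prodS N n (F : nat -> {poly Pinf}) :
  eq_below N (trunc N (\prod_(i < n.+1) F i)) (trunc N (\prod_(i < n) F i) * F n).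
Proof.
move=> k hk; rewrite (eq_below_trunc _ hk) big_ord_recr /=.
by apply: coefM_eq_belowl hk => i hi; rewrite (eq_below_trunc _ hi).
Qed.

Lemma GserS N t : eq_below N (Gser N t.+2) (Gser N t.+1 * Gfactor N t.+1).
Proof. exact: trunc_prodS. Qed.

Lemma HserS N t : eq_below N (Hser N t.+2) (Hser N t.+1 * Hfactor N t).
Proof. exact: trunc_prodS. Qed.

Section GradedSeries.

Variable N : nat.

Lemma graded_unit_aX2 : graded_unit N 0 (fun _ => aser N * 'X^2).
Proof.
apply: graded_unit_cst; first by rewrite coefMXn /= malgC0E.
move=> s /andP [s0 sN]; rewrite coefMXn; case: ltnP => hs; first exact: all_msupp0.
rewrite /aser coef_poly; case: ltnP => _; last exact: all_msupp0.
by apply: all_msupp_mvar; rewrite gradeU; lia.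
Qed.

Lemma graded_unit_1aX2 : graded_unit N 1 (fun _ => 1 + aser N * 'X^2).
Proof. by have := graded_unitD (graded_unit1 N) graded_unit_aX2; rewrite addr0. Qed.

Lemma graded_unit_natX o : graded_unit N 0 (fun t => ((t + o)%:R : Pinf) *: 'X).
Proof.
split=> [t|s _]; first by rewrite coefZ coefX mulr0 malgC0E.
apply: (@eq_wpoly _ (fun t => (t + o)%:R * (s == 1)%N%:R)) => [t|].
  by rewrite coefZ coefX.
case: eqP => [->|_]; first by apply: eq_wpoly (wpoly_natD o) => t; rewrite mulr1.
by apply: eq_wpoly (wpoly_rat _ 0) => t; rewrite mulr0 malgC0E.
Qed.

Hypothesis N_gt0 : (0 < N)%N.

Lemma graded_unit_Gfactor o : graded_unit N 1 (fun t => Gfactor N (t + o)).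
Proof.
have := graded_unitN (graded_unit_natX o); rewrite oppr0 => /(graded_unit_sinv N_gt0).
by move/(graded_unitM graded_unit_1aX2); rewrite mulr1.
Qed.

Lemma graded_unit_Hfactor : graded_unit N 1 (Hfactor N).
Proof.
have := graded_unitN graded_unit_aX2; rewrite oppr0 => /(graded_unit_sinv N_gt0).
have := graded_unitD (graded_unit1 N) (graded_unitN (graded_unit_natX 1)).
rewrite oppr0 addr0 => h1 /(graded_unitM h1); rewrite mulr1.
by apply: eq_graded_unit => t; rewrite addn1.
Qed.

Lemma graded_Gser : graded N (fun t => Gser N t.+1).
Proof.
have Gfactor_unit : graded_unit N 1 (fun t => Gfactor N t.+1).
  by apply: eq_graded_unit (graded_unit_Gfactor 1) => t; rewrite addn1.
apply: (graded_prod Gfactor_unit); first exact: GserS.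
move=> r hr; rewrite /Gser big_ord1 /= (eq_below_trunc _ hr).
have := wpoly_at0 (graded_unit_coef (graded_unit_Gfactor 0) hr).
by apply: sub_all_msupp => m; lia.
Qed.

Lemma graded_Hser : graded N (fun t => Hser N t.+1).
Proof.
apply: (graded_prod graded_unit_Hfactor); first exact: HserS.
move=> r hr; rewrite /Hser big_ord0 (eq_below_trunc _ hr) coef1.
by case: eqP => _; [apply: all_msupp1; rewrite grade1 | apply: all_msupp0].
Qed.

End GradedSeries.

Lemma wpoly_coefGH n : wpoly (n.+1).*2 (fun t => coefGH n t.+1).
Proof.
exact: graded_mul_unit (gradedB (graded_Gser (ltn0Sn _)) (graded_Hser (ltn0Sn _)))
                      (graded_unit_1aX2 n.+2) n.+1 (ltnSn _).
Qed.

Lemma const_coef_mvar k : const_coef (mvar k) = 0.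
Proof. by rewrite /mvar mcoeffU cm1_eq1. Qed.

Lemma map_const_aser N : map_poly const_coef (aser N) = 0.
Proof.
apply/polyP => i; rewrite coef_map /= coef_poly coef0.
by case: ifP => _; [exact: const_coef_mvar | exact: mcoeff0].
Qed.

Lemma map_const_1aX2 N : map_poly const_coef (1 + aser N * 'X^2) = 1.
Proof. by rewrite rmorphD rmorphM /= map_const_aser mul0r addr0 rmorph1. Qed.

Lemma map_const_natX j : map_poly const_coef ((j%:R : Pinf) *: 'X) = (j%:R : rat) *: 'X.
Proof. by rewrite map_polyZ /= map_polyX rmorph_nat. Qed.

Lemma map_const_sinv N q :
  eq_below N (map_poly const_coef (sinv N q)) (\sum_(k < N) (- map_poly const_coef q) ^+ k).
Proof.
move=> k hk; rewrite coef_map /= /sinv (eq_below_trunc _ hk) -coef_map rmorph_sum /=.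
rewrite (eq_bigr (fun i : 'I_N => (- map_poly const_coef q) ^+ i)) // => i _.
by rewrite rmorphXn rmorphN.
Qed.

Lemma geometric_trunc N (y : rat) :
  eq_below N ((\sum_(k < N) (- (y *: 'X)) ^+ k) * (1 + y *: 'X)) 1.
Proof.
move=> k hk; set x := - (y *: 'X).
have -> : 1 + y *: 'X = - (x - 1) by rewrite /x opprB opprK addrC.
rewrite mulrN mulrC -subrX1 opprB coefB /x -scaleNr exprZn coefZ coefXn.
by rewrite ltn_eqF // mulr0 subr0.
Qed.

Definition Gfree N t := map_poly const_coef (Gser N t.+1).
Definition Hfree N t := map_poly const_coef (Hser N t.+1).

Section ConstantTerms.

Variable N : nat.
Hypothesis N_gt0 : (0 < N)%N.

Lemma GfreeS t : eq_below N (Gfree N t.+1 * (1 + t.+1%:R *: 'X)) (Gfree N t).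
Proof.
have factor_inv : eq_below N (map_poly const_coef (Gfactor N t.+1) * (1 + t.+1%:R *: 'X)) 1.
  move=> i hi; rewrite /Gfactor rmorphM /= map_const_1aX2 mul1r.
  by rewrite (coefM_eq_belowl _ (map_const_sinv _) hi) map_const_natX geometric_trunc.
move=> k hk; rewrite /Gfree (coefM_eq_belowl _ (eq_below_map (@GserS N t)) hk).
by rewrite rmorphM /= -mulrA (coefM_eq_belowr _ factor_inv hk) mulr1.
Qed.

Lemma HfreeS t : eq_below N (Hfree N t.+1) (Hfree N t * (1 - t.+1%:R *: 'X)).
Proof.
move=> k hk; rewrite /Hfree (eq_below_map (@HserS N t) hk) rmorphM /=.
apply: coefM_eq_belowr hk => i hi.
rewrite /Hfactor rmorphM /= (coefM_eq_belowr _ (map_const_sinv _) hi).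
by rewrite rmorphM /= map_const_aser mul0r oppr0 sum_expr0 // mulr1 rmorphB rmorph1 /= map_const_natX.
Qed.

Lemma Gfree0 : eq_below N (Gfree N 0%N) 1.
Proof.
move=> k hk; rewrite /Gfree coef_map /= /Gser (eq_below_trunc _ hk) -coef_map big_ord1.
rewrite /Gfactor rmorphM /= map_const_1aX2 mul1r (map_const_sinv _ hk).
by rewrite scale0r rmorph0 oppr0 sum_expr0.
Qed.

Lemma Hfree0 : eq_below N (Hfree N 0%N) 1.
Proof.
by move=> k hk; rewrite /Hfree coef_map /= /Hser (eq_below_trunc _ hk) big_ord0 -coef_map rmorph1.
Qed.

End ConstantTerms.

Lemma coefM_1DX (p : {poly rat}) c r :
  (p * (1 + c *: 'X))`_r = p`_r + (if r is r'.+1 then c * p`_r' else 0).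
Proof. by rewrite mulrDr mulr1 coefD -scalerAr coefZ coefMX; case: r => [|r]; rewrite ?mulr0. Qed.

Lemma coefM_1BX (p : {poly rat}) c r :
  (p * (1 - c *: 'X))`_r = p`_r - (if r is r'.+1 then c * p`_r' else 0).
Proof. by rewrite mulrBr mulr1 coefB -scalerAr coefZ coefMX; case: r => [|r]; rewrite ?mulr0. Qed.

Lemma natpoly_const_coefGH n :
  natpoly n.*2.+1 (diff_lead n.+1) (fun t => const_coef (coefGH n t.+1)).
Proof.
have N_gt0 : (0 < n.+2)%N by [].
pose G r t := (Gfree n.+2 t)`_r.
pose H r t := (Hfree n.+2 t)`_r.
have G0t t : G 0%N t = 1.
  elim: t => [|t ih]; first by rewrite /G (Gfree0 N_gt0) // coef1.
  by rewrite -ih /G -(@GfreeS n.+2 t) // coefM_1DX addr0.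
have H0t t : H 0%N t = 1.
  elim: t => [|t ih]; first by rewrite /H Hfree0 // coef1.
  by rewrite -ih /H (HfreeS N_gt0 t) // coefM_1BX subr0.
have GS r t : (0 < r < n.+2)%N -> G r t = G r t.+1 + t.+1%:R * G r.-1 t.+1.
  by case: r => [|r] // /andP [_ hr]; rewrite /G -(@GfreeS n.+2 t) // coefM_1DX.
have HS r t : (0 < r < n.+2)%N -> H r t.+1 = H r t - t.+1%:R * H r.-1 t.
  by case: r => [|r] // /andP [_ hr]; rewrite /H (HfreeS N_gt0 t) // coefM_1BX.
have [diff_n _] := natpoly_diff G0t H0t GS HS (ltnSn n.+1).
apply: eq_natpoly diff_n => t; rewrite /G /H /coefGH /= -[in RHS]coef_map rmorphM rmorphB /=.
by rewrite map_const_1aX2 mulr1 coefB.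
Qed.

(* At j = t+1, the defining identity of the S_i(n) has (2j-1) = 2t+1 and
   v = j(j-1) = (t+1)t. *)
Definition vpoly : {poly rat} := ('X + 1) * 'X.

Definition spec_poly (s : nat -> rat) (n : nat) : {poly rat} :=
  (2%:R *: 'X + 1) * \sum_(i < n.+1) s i *: vpoly ^+ i.

Lemma coef_vpolyX_eq0 i j : (i.*2 < j)%N -> (vpoly ^+ i)`_j = 0.
Proof.
elim: i j => [|i ih] j hj; first by rewrite expr0 coef1; case: j hj.
rewrite exprSr {2}/vpoly mulrA coefMX mulrDr mulr1 coefD coefMX.
case: j hj => [|[|j]] //= hj; rewrite doubleS in hj.
by rewrite !ih ?addr0 //; lia.
Qed.

Lemma coef_vpolyX_lead i : (vpoly ^+ i)`_(i.*2) = 1.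
Proof.
elim: i => [|i ih]; first by rewrite expr0 coef1.
rewrite exprSr {2}/vpoly mulrA coefMX mulrDr mulr1 coefD coefMX doubleS /=.
by rewrite ih coef_vpolyX_eq0 ?addr0.
Qed.

Lemma coef_spec_poly s n M : (M <= n)%N -> (forall i, (M < i <= n)%N -> s i = 0) ->
  (spec_poly s n)`_(M.*2.+1) = 2%:R * s M.
Proof.
move=> hM s_high.
have sum_cut : \sum_(i < n.+1) s i *: vpoly ^+ i = \sum_(i < M.+1) s i *: vpoly ^+ i.
  rewrite -!(big_mkord xpredT (fun i => s i *: vpoly ^+ i)).
  rewrite (big_cat_nat (n := M.+1)) //= [X in _ + X]big1_seq ?addr0 //.
  move=> i /andP [_]; rewrite mem_index_iota => /andP [h1 h2].
  by rewrite s_high ?scale0r // h1 -ltnS h2.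
have sum_high j : (M.*2 < j)%N -> (\sum_(i < M.+1) s i *: vpoly ^+ i)`_j = 0.
  move=> hj; rewrite coef_sum big1 // => i _; rewrite coefZ coef_vpolyX_eq0 ?mulr0 //.
  by apply: leq_ltn_trans hj; rewrite leq_double -ltnS.
have sum_lead : (\sum_(i < M.+1) s i *: vpoly ^+ i)`_(M.*2) = s M.
  rewrite coef_sum big_ord_recr /= coefZ coef_vpolyX_lead mulr1 big1 ?add0r // => i _.
  by rewrite coefZ coef_vpolyX_eq0 ?mulr0 // ltn_double.
by rewrite /spec_poly sum_cut mulrDl mul1r coefD -scalerAl coefZ coefXM /= sum_lead sum_high ?addr0.
Qed.

Lemma horner_spec_poly s n (x : rat) :
  (spec_poly s n).[x] = (2%:R * x + 1) * \sum_(i < n.+1) s i * ((x + 1) * x) ^+ i.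
Proof.
rewrite /spec_poly hornerM hornerD hornerZ hornerX hornerC horner_sum.
congr (_ * _); apply: eq_bigr => i _.
by rewrite hornerZ horner_exp /vpoly hornerM hornerD hornerX hornerC.
Qed.

Lemma mcoeffMnatl (k : nat) (p : Pinf) a : ((k%:R : Pinf) * p)@_a = k%:R * p@_a.
Proof. by rewrite mulr_natl mcoeffMn mulr_natl. Qed.

Lemma mcoeffMnatr (p : Pinf) (k : nat) a : (p * (k%:R : Pinf))@_a = p@_a * k%:R.
Proof. by rewrite mulr_natr mcoeffMn mulr_natr. Qed.

Definition spec_coefs (S : nat -> nat -> Pinf) n (a : cm) (i : nat) : rat :=
  if i == 0%N then (mvar n.-1 + S n 0%N)@_a else (S n i)@_a.

Lemma mcoeff_coefGH S n a t : (1 <= n)%N -> S_spec S n ->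
  (coefGH n t.+1)@_a = (spec_poly (spec_coefs S n a) n).[t%:R].
Proof.
move=> n_gt0 [_ ->] //; rewrite horner_spec_poly.
rewrite (_ : (2 * t.+1 - 1)%N = (2 * t + 1)%N); last by lia.
rewrite (_ : (t.+1 * (t.+1 - 1))%N = (t.+1 * t)%N); last by lia.
rewrite mcoeffMnatl natrD natrM; congr (_ * _).
rewrite big_ord_recl /spec_coefs /= expr0 mulr1 !mcoeffD; congr (_ + _).
rewrite raddf_sum big_add1 /= big_mkord; apply: eq_bigr => i _ /=.
by rewrite -natrX mcoeffMnatr natrX natrM -natr1.
Qed.

Lemma wpoly_mcoeff D f a : wpoly D f -> exists phi : {poly rat},
  (forall e, phi`_e != 0 -> (grade a + e <= D)%N) /\ forall t, (f t)@_a = phi.[t%:R].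
Proof.
move=> [P [wP fP]]; exists (map_poly (mcoeff a) P); split.
  by move=> e; rewrite coef_map /= mcoeff_neq0; exact: wP.
have size_map : (size (map_poly (mcoeff a) P) <= D.+1)%N.
  apply/leq_sizeP => j hj; rewrite coef_map /= (weighted_coef_eq0 wP hj); exact: mcoeff0.
move=> t; rewrite fP (horner_coef_wide _ (size_weighted wP)) (horner_coef_wide _ size_map).
rewrite raddf_sum; apply: eq_bigr => i _.
by rewrite coef_map /= -natrX mcoeffMnatr natrX.
Qed.

Lemma mcoeff_mvar_neq k (a : cm) : a != ucm k -> (mvar k)@_a = 0.
Proof. by move=> h; rewrite /mvar mcoeffU eq_sym (negbTE h). Qed.

Section SpecConsequences.

Variables (S : nat -> nat -> Pinf) (n : nat).
Hypotheses (n_gt0 : (1 <= n)%N) (S_n : S_spec S n).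

Lemma grade_S a i : (i <= n)%N -> a \in msupp (S n i) -> a != 1%M ->
  (grade a + i.*2 <= n.*2.+1)%N.
Proof.
move=> hi ha a_neq1.
have [phi [phi_grade phiE]] := wpoly_mcoeff a (wpoly_coefGH n).
have phi_spec : phi = spec_poly (spec_coefs S n a) n.
  by apply: eq_poly_nat => t; rewrite -phiE (mcoeff_coefGH _ _ n_gt0 S_n).
rewrite {}phi_spec in phi_grade.
have s_i : spec_coefs S n a i != 0.
  rewrite /spec_coefs; have [i0|i0] := eqVneq i 0%N; last by rewrite mcoeff_neq0.
  rewrite mcoeffD mcoeff_mvar_neq ?add0r; first by rewrite mcoeff_neq0 -i0.
  apply: contraTneq ha => ->; apply/negP => /(S_n.1 i hi _)/(_ n.-1).
  by rewrite mdomU in_fset1 eqxx ltnn => /(_ isT).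
(* the last nonzero coefficient s_M shows up as 2 s_M in front of t^(2M+1) *)
pose P M := (M <= n)%N && (spec_coefs S n a M != 0).
have P_i : P i by rewrite /P hi.
have P_le j : P j -> (j <= n)%N by case/andP.
case: (ex_maxnP (ex_intro _ i P_i) P_le) => M /andP [Mn s_M] M_max.
have := phi_grade M.*2.+1; rewrite coef_spec_poly // => [|j /andP [Mj jn]].
  rewrite mulf_neq0 ?pnatr_eq0 // => /(_ isT).
  by have := M_max i P_i; rewrite -leq_double; lia.
by apply/eqP; apply: contraTT Mj => sj; rewrite -leqNgt M_max // /P jn.
Qed.

Lemma S_top : S n n = (diff_lead n.+1 / 2%:R)%:MP.
Proof.
apply/malgP => a; rewrite mcoeffC.
have [->|a_neq1] := eqVneq a 1%M; last first.
  rewrite mulr0n; apply/eqP; rewrite mcoeff_eq0; apply/negP => ha.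
  by have := grade_S (leqnn n) ha a_neq1; have := grade_ge3 a_neq1; lia.
have [p [_ p_lead pE]] := natpoly_const_coefGH n.
have p_spec : p = spec_poly (spec_coefs S n 1%M) n.
  by apply: eq_poly_nat => t; rewrite -pE (mcoeff_coefGH _ _ n_gt0 S_n).
rewrite {}p_spec in p_lead.
have := @coef_spec_poly (spec_coefs S n 1%M) n n (leqnn n).
rewrite p_lead mulr1n /spec_coefs (negbTE (lt0n_neq0 n_gt0)) => ->; last first.
  by move=> i; rewrite ltnNge => /andP [/negbTE ->].
by field.
Qed.

Lemma sdeg_S i : (i <= n)%N -> all_msupp (fun a => sdeg a + i <= n)%N (S n i).
Proof.
move=> hi a ha; have [->|a_neq1] := eqVneq a 1%M; first by rewrite /sdeg mweight1.
by have := grade_S hi ha a_neq1; rewrite grade_sdeg; have := mdeg_gt0 a_neq1; lia.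
Qed.

End SpecConsequences.

Definition mvars_lt (k : nat) (m : cm) := forall i, i \in finsupp m -> (i < k)%N.

Definition poly_in (k d : nat) (p : Pinf) :=
  all_msupp (fun m => mvars_lt k m /\ (mdeg m <= d)%N) p.

Section PolyIn.

Implicit Types (k d : nat) (p q : Pinf).

Lemma mvars_lt1 k : mvars_lt k 1%M.
Proof. by move=> i; rewrite mdom1 in_fset0. Qed.

Lemma mvars_ltM k (m1 m2 : cm) : mvars_lt k m1 -> mvars_lt k m2 -> mvars_lt k (m1 * m2)%M.
Proof. by move=> h1 h2 i; rewrite mdomD in_fsetU => /orP [/h1|/h2]. Qed.

Lemma poly_in_widen k k' d d' p : (k <= k')%N -> (d <= d')%N ->
  poly_in k d p -> poly_in k' d' p.
Proof.
move=> kk' dd'; apply: sub_all_msupp => m [vars deg]; split; last exact: leq_trans dd'.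
by move=> i /vars /leq_trans; apply.
Qed.

Lemma poly_inM k d1 d2 p q : poly_in k d1 p -> poly_in k d2 q -> poly_in k (d1 + d2) (p * q).
Proof.
apply: all_msuppM => m1 m2 [v1 d1m] [v2 d2m].
by split; [exact: mvars_ltM | rewrite mdegM leq_add].
Qed.

Lemma poly_inC k d (c : rat) : poly_in k d c%:MP.
Proof. by apply: all_msuppC; split; [exact: mvars_lt1 | rewrite mdeg1]. Qed.

Lemma poly_in_nat k d n : poly_in k d (n%:R : Pinf).
Proof. by rewrite -mpolyC_nat; apply: poly_inC. Qed.

Lemma poly_in_mvar k d j : (j < k)%N -> (0 < d)%N -> poly_in k d (mvar j).
Proof.
move=> jk d_gt0; apply: all_msupp_mvar; split; last by rewrite mdegU.
by move=> i; rewrite mdomU in_fset1 => /eqP ->.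
Qed.

Lemma poly_inX k d e p : poly_in k d p -> poly_in k (e * d) (p ^+ e).
Proof.
move=> h; elim: e => [|e ih]; first by rewrite expr0 -mpolyC1E; apply: poly_inC.
by rewrite exprS mulSn; apply: poly_inM.
Qed.

Lemma poly_in_vars_below k d p : poly_in k d p -> vars_below k p.
Proof. by move=> h m /h []. Qed.

Lemma poly_in_tot_deg k d p : poly_in k d p -> tot_deg_le d p.
Proof.
move=> h; rewrite /tot_deg_le msizeE big_seq.
by apply: (big_ind (fun x => x <= d.+1)%N) => // [x y hx hy|m /h []]; rewrite ?geq_max ?hx.
Qed.

End PolyIn.

Lemma DE p : D p = mmap (@malgC _ rat) Dmon p.
Proof. by rewrite /D mmapE; apply: eq_bigr => m _; rewrite mul_malgC. Qed.

Lemma DB p q : D (p - q) = D p - D q.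
Proof. by rewrite !DE mmapB. Qed.

Lemma D_mvar k : D (mvar k) = mvar k.+1.
Proof.
rewrite DE /mvar mmapU /= mpolyC1E mul1r /Dmon mdomU big_seq_fset1 cmUU.
have -> : divcm (ucm k) (ucm k) = 1%M by apply/eqP/cmP => i; rewrite divcmE subnn cm1.
by rewrite mul_malgC ?mulr1n scale1r.
Qed.

Lemma all_msupp_D (Q Q' : cm -> Prop) p :
  (forall (m : cm) (k : nat), k \in finsupp m -> Q m -> Q' (divcm m (ucm k) * ucm k.+1)%M) ->
  all_msupp Q p -> all_msupp Q' (D p).
Proof.
move=> h hp; apply: all_msupp_sum => m _.
case hm: (m \in msupp p); last by rewrite mcoeff_outdom ?hm // scale0r; apply: all_msupp0.
apply: all_msuppZ; rewrite /Dmon big_seq; apply: all_msupp_sum => k hk.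
apply: (@all_msuppM (fun x => x = divcm m (ucm k)) (fun x => x = ucm k.+1)).
- by move=> _ _ -> ->; apply: h => //; apply: hp.
- exact: all_msuppU.
- exact: all_msuppU.
Qed.

Lemma divcmUK (m : cm) k : k \in finsupp m -> (divcm m (ucm k) * ucm k)%M = m.
Proof.
rewrite -cmE_neq0 => hk; apply/eqP/cmP => i; rewrite cmM divcmE cmU.
have [<-|ne] := eqVneq k i; last by rewrite subn0 addn0.
by rewrite subnK // lt0n.
Qed.

Lemma poly_in_D k d p : poly_in k d p -> poly_in k.+1 d (D p).
Proof.
apply: all_msupp_D => m j hj [vars deg]; split; last first.
  by move: deg; rewrite -{1}(divcmUK hj) !mdegM !mdegU.
apply: mvars_ltM => i; last by rewrite mdomU in_fset1 => /eqP ->; rewrite ltnS vars.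
rewrite -cmE_neq0 divcmE => hi; apply/ltnW/vars.
by rewrite -cmE_neq0; apply: contra hi => /eqP ->.
Qed.

Lemma PS m : P m.+2 = D (P m.+1) - 3%:R * mvar 0 * P m.+1.
Proof. by []. Qed.

Lemma poly_in_P i : poly_in i.+1 i.+1 (P i.+1) /\ poly_in i i.+1 (P i.+1 - mvar i).
Proof.
elim: i => [|i [P_in P_lower]].
  by rewrite /P /= subrr; split; [apply: poly_in_mvar | apply: all_msupp0].
have P_lowerS : poly_in i.+1 i.+2 (P i.+2 - mvar i.+1).
  rewrite PS addrAC -D_mvar -DB; apply: all_msuppB.
    exact: poly_in_widen (poly_in_D P_lower).
  have := poly_inM (poly_inM (@poly_in_nat i.+1 0 3) (@poly_in_mvar i.+1 1 0 isT isT)) P_in.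
  by rewrite add0n add1n.
split=> //; rewrite -(subrK (mvar i.+1) (P i.+2)); apply: all_msuppD.
  exact: poly_in_widen P_lowerS.
exact: poly_in_mvar.
Qed.

Definition subst_mon (c : seq Pinf) (m : cm) : Pinf := \prod_(k <- finsupp m) c`_k ^+ m k.

Lemma all_msupp_subst (Q : cm -> Prop) c p :
  (forall m, m \in msupp p -> all_msupp Q (subst_mon c m)) -> all_msupp Q (subst c p).
Proof.
move=> h; rewrite /subst mmapE big_seq; apply: all_msupp_sum => m hm.
apply: (@all_msuppM (fun x => x = 1%M) _ _ _ _ _ _ (h m hm)); last exact: all_msuppC.
by move=> _ m2 -> ?; rewrite mul1m.
Qed.

Lemma substC c (a : rat) : subst c a%:MP = a%:MP.
Proof. by rewrite /subst mmapU /= mdom1 big_seq_fset0 mulr1. Qed.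

Lemma poly_in_subst_mon k c (m : cm) :
  (forall j, j \in finsupp m -> poly_in k j.+1 c`_j) -> poly_in k (sdeg m) (subst_mon c m).
Proof.
suff gen (r : seq nat) : (forall j, j \in r -> poly_in k j.+1 c`_j) ->
    poly_in k (\sum_(j <- r) m j * j.+1) (\prod_(j <- r) c`_j ^+ m j).
  exact: gen.
elim: r => [|j r ih] h; first by rewrite !big_nil -mpolyC1E; apply: poly_inC.
rewrite !big_cons; apply: poly_inM; first exact: poly_inX (h j (mem_head _ _)).
by apply: ih => i hi; apply: h; rewrite in_cons hi orbT.
Qed.

Lemma size_Chats S m : size (Chats S m) = m.
Proof. by elim: m => //= m ih; rewrite size_rcons ih. Qed.

Lemma ChatS S n : Chat S n.+1 = Chat_step S n.+1 (Chats S n).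
Proof. by rewrite /Chat /= nth_rcons size_Chats ltnn eqxx. Qed.

Lemma nth_Chats S m k : (k < m)%N -> (Chats S m)`_k = Chat S k.+1.
Proof.
elim: m => // m ih; rewrite ltnS leq_eqVlt => /orP [/eqP ->|hk].
  by rewrite ChatS /= nth_rcons size_Chats ltnn eqxx.
by rewrite /= nth_rcons size_Chats hk ih.
Qed.

Lemma top_coef n :
  (3 * 2 ^ n.+1)%N%:R * (diff_lead n.+2 / 2%:R) = (-1) ^+ n / n`!%:R :> rat.
Proof. by rewrite natrM natrX /diff_lead exprS; field; rewrite natr_fact_neq0 expf_neq0. Qed.

Section ChatStep.

Variables (S : nat -> nat -> Pinf) (n : nat) (c : seq Pinf).
Hypothesis S_n : S_spec S n.+1.
Hypothesis c_in : forall k, (k < n)%N -> poly_in k.+1 k.+1 c`_k.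

Lemma poly_in_subst_S i : (i <= n.+1)%N -> poly_in n (n.+1 - i) (subst c (S n.+1 i)).
Proof.
move=> hi; apply: all_msupp_subst => m hm.
have vars_m j : j \in finsupp m -> (j < n)%N by exact: S_n.1 i hi m hm j.
have c_vars j : j \in finsupp m -> poly_in n j.+1 c`_j.
  by move=> hj; exact: poly_in_widen (vars_m j hj) (leqnn _) (c_in (vars_m j hj)).
apply: (poly_in_widen (leqnn n) _ (poly_in_subst_mon c_vars)).
by have := sdeg_S (ltn0Sn n) S_n hi hm; lia.
Qed.

Lemma Chat_step_decomp : exists F, poly_in n n.+1 F /\
  Chat_step S n.+1 c = F + ((-1) ^+ n / n`!%:R : rat) *: mvar n.
Proof.
set kappa := (-1) ^+ n / n`!%:R : rat.
have [_ P_lower] := poly_in_P n.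
exists (- subst c (S n.+1 0%N)
        + \sum_(1 <= i < n.+1) (3 * 2 ^ i)%N%:R * subst c (S n.+1 i) * P i
        + kappa%:MP * (P n.+1 - mvar n)); split.
  apply: all_msuppD; last by rewrite -[n.+1]add0n; apply: poly_inM P_lower; apply: poly_inC.
  apply: all_msuppD; first by apply: all_msuppN; rewrite -[n.+1]subn0; apply: poly_in_subst_S.
  rewrite big_nat_cond; apply: all_msupp_sum => -[//|i] /andP [/andP [_ hi] _].
  have [P_in _] := poly_in_P i.
  have P_in' : poly_in n i.+1 (P i.+1) by exact: poly_in_widen (hi : i.+1 <= n)%N (leqnn _) P_in.
  apply: (poly_in_widen (leqnn n) _ (poly_inM (poly_inM (@poly_in_nat n 0 _) (poly_in_subst_S (ltnW hi))) P_in')).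
  by lia.
have top : (3 * 2 ^ n.+1)%N%:R * (diff_lead n.+2 / 2%:R)%:MP = kappa%:MP :> Pinf.
  by rewrite -mpolyC_nat -rmorphM top_coef.
rewrite /Chat_step big_nat_recr // (S_top (ltn0Sn n) S_n) substC top.
by rewrite -mul_malgC mulrBr !addrA subrK.
Qed.

End ChatStep.

Lemma poly_in_Chat S : (forall m, (1 <= m)%N -> S_spec S m) ->
  forall n, (1 <= n)%N -> poly_in n n (Chat S n).
Proof.
move=> S_spec_all; elim/ltn_ind => -[//|n] ih _.
have c_in k : (k < n)%N -> poly_in k.+1 k.+1 (Chats S n)`_k.
  by move=> hk; rewrite nth_Chats //; apply: ih.
rewrite ChatS; have [F [F_in ->]] := Chat_step_decomp (S_spec_all n.+1 isT) c_in.
by apply: all_msuppD; [exact: poly_in_widen F_in | exact: all_msuppZ (poly_in_mvar (ltnSn n) (ltn0Sn n))].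
Qed.

Unset Implicit Arguments.

Theorem proposition4p4 (S : nat -> nat -> Pinf) :
  (forall m : nat, (1 <= m)%N -> S_spec S m) ->
  forall n : nat, (1 <= n)%N ->
  exists F : Pinf,
    vars_below n.-1 F /\ tot_deg_le n F /\
    Chat S n = F + ((-1) ^+ n.-1 / (n.-1)`!%:R : rat) *: mvar n.-1.
Proof.
move=> S_spec_all [//|n] _ /=.
have c_in k : (k < n)%N -> poly_in k.+1 k.+1 (Chats S n)`_k.
  by move=> hk; rewrite nth_Chats //; apply: poly_in_Chat.
have [F [F_in F_eq]] := Chat_step_decomp (S_spec_all n.+1 isT) c_in.
exists F; split; first exact: poly_in_vars_below F_in.
by split; [exact: poly_in_tot_deg F_in | rewrite ChatS].
Qed.
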